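(* Let $r \in C$. For any generator $v(x\,;\,c) \in V$ (with $x\in\overline{\mathbb D_1}$, $c\in\mathbb C$), \[ T_r v(x\,;\,c) \;=\; v\big( f_r(x)\,;\,\ell_r(x) \big) \,-\, v\big( f_r(0)\,;\,\ell_r(0) \big), \] where each coordinate of the left-hand side is given by an absolutely convergent series. Therefore, we can define the linear operator $T_r: V \to V$ via coordinatewise matrix–vector multiplication.
   Context: $C$ is a finite index set. For each $r\in C$, $B_r=\begin{pmatrix} a_r & b_r\\ c_r& d_r\end{pmatrix}$ is an invertible $2\times 2$ real matrix with all entries strictly positive. Set \[ \begin{pmatrix} \alpha_r & \beta_r \\ \gamma_r & \delta_r \end{pmatrix}=\frac12\begin{pmatrix} a_r-b_r-c_r+d_r & a_r+b_r-c_r-d_r\\ a_r-b_r+c_r-d_r & a_r+b_r+c_r+d_r\end{pmatrix}, \qquad f_r(x)=\frac{\alpha_r x+\beta_r}{\gamma_r x+\delta_r}, \] so $f_r$ is a real Möbius transformation and there is $0<\rho<1$ with $f_r([-1,1])\subset[-\rho,\rho]$ for all $r\in C$; $f_r'$ is its usual derivative. For a Möbius map $g(x)=\frac{ax+b}{cx+d}$ its ''transpose'' is $g^\top(x)=\frac{ax+c}{bx+d}$; here $f_r^\top([-1,1])\subset(-1,1)$, $\delta_r>0$ and $|f_r^\top(0)|=|\gamma_r/\delta_r|<1$. Define $\ell_r(x)=\mathrm{Log}(\gamma_r x+\delta_r)$ (principal branch, $\mathrm{Log}(1)=0$), holomorphic on a neighborhood of $\overline{\mathbb D_1}$, where $\mathbb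 D_t=\{z\in\mathbb C:|z|<t\}$. For $x\in\overline{\mathbb D_1}$ and $c\in\mathbb C$, $v(x\,;\,c)\in\ell^\infty(\mathbb N_0)$ is the sequence with $(v(x;c))_0=c$ and $(v(x;c))_n=-\frac{(-x)^n}{n}$ for $n\ge1$; $V$ is the complex linear span of all such $v(x\,;\,c)$. $T_r=(b^{(r)}_{k,n})_{k,n\in\mathbb N_0}$ is the infinite matrix with $b^{(r)}_{k,0}=0$ for $k\ge0$, $b^{(r)}_{0,n}=(f_r^\top(0))^n$ for $n\ge1$, and for $k,n\ge1$, \[ b^{(r)}_{k,n}=\sum_{\ell=1}^{\min\{k,n\}}\binom{n}{\ell}\binom{k-1}{\ell-1}(f_r^\top(0))^{n-\ell}(-f_r(0))^{k-\ell}(f_r'(0))^{\ell}, \] acting on sequences by coordinatewise matrix–vector multiplication. *)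

From Stdlib Require Export Reals.
From Coquelicot Require Export Coquelicot.
Open Scope R_scope.

(* Entries of the matrix (alpha beta; gamma delta) built from B = (a b; c d). *)
Definition alph (a b c d : R) : R := (a - b - c + d) / 2.
Definition bet  (a b c d : R) : R := (a + b - c - d) / 2.
Definition gam  (a b c d : R) : R := (a - b + c - d) / 2.
Definition delt (a b c d : R) : R := (a + b + c + d) / 2.

Definition fR (a b c d : R) (x : R) : R :=
  (alph a b c d * x + bet a b c d) / (gam a b c d * x + delt a b c d).
Definition fC (a b c d : R) (z : C) : C :=
  ((RtoC (alph a b c d) * z + RtoC (bet a b c d)) /
   (RtoC (gam a b c d) * z + RtoC (delt a b c d)))%C.

Definition fT (a b c d : R) (x : R) : R :=
  (alph a b c d * x + gam a b c d) / (bet a b c d * x + delt a b c d).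

(* Principal argument in (-pi, pi] and principal logarithm Log z = ln|z| + i Arg z. *)
Definition Carg (z : C) : R :=
  if Req_EM_T (Im z) 0 then
    (if Rlt_dec (Re z) 0 then PI else 0)
  else 2 * atan (Im z / (Cmod z + Re z)).
Definition CLog (z : C) : C := (RtoC (ln (Cmod z)) + Ci * RtoC (Carg z))%C.

Definition ell (a b c d : R) (z : C) : C :=
  CLog (RtoC (gam a b c d) * z + RtoC (delt a b c d))%C.

Definition vseq (x c0 : C) (n : nat) : C :=
  match n with
  | O => c0
  | S _ => (- (Cpow (- x) n) / RtoC (INR n))%C
  end.

Definition Tentry (a b c d : R) (k n : nat) : R :=
  match k, n with
  | _, O => 0
  | O, S _ => pow (fT a b c d 0) n
  | S _, S _ =>
      sum_n_m (fun l : nat =>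
        Binomial.C n l * Binomial.C (k - 1) (l - 1)
        * pow (fT a b c d 0) (n - l) * pow (- fR a b c d 0) (k - l)
        * pow (Derive (fR a b c d) 0) l) 1 (Nat.min k n)
  end.

(* Write f_r in the normal form f(z) = p + D z / (1 + t z) with p = f_r(0), D = f_r'(0) and
   t = f_r^T(0) = γ_r/δ_r, so that |t| < 1.  Row 0 of T_r sends v(x; c) to
   Σ_n t^n v_n(x) = Σ_n v_n(t x), the series of Log(1 + t x) = ℓ_r(x) - ℓ_r(0).  For a row
   k ≥ 1, expand b_{k,n} as a sum over l and sum over n first: the negative binomial series
   gives Σ_n C(n,l) t^(n-l) v_n(x) = v_l(x / (1 + t x)), and by the binomial theorem the
   remaining finite sum over l is v_k(p + D x / (1 + t x)) - v_k(p) = v_k(f_r(x)) - v_k(f_r(0)).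
   The logarithm series is identified by differentiating the real and imaginary parts of
   Σ_n v_n(r y) = Σ_n r^n v_n(y) with respect to r ∈ [0, 1] and comparing with
   ln |1 + r y| and atan (r Im y / (1 + r Re y)). *)

From Stdlib Require Import Lra Lia.

(* Equalities produced by Coquelicot's generic lemmas live in carriers such as
   [AbelianMonoid.sort C_AbelianMonoid], which [ring] and [field] do not recognise. *)
Ltac change_eq T := match goal with |- ?a = ?b => change (@eq T a b) end.

(** * Absolutely convergent complex series *)

Definition is_abs_series (a : nat -> C) (l : C) : Prop :=
  ex_series (fun n => Cmod (a n)) /\ is_series a l.

Lemma RtoC_neq_0 (r : R) : r <> 0 -> RtoC r <> 0%C.
Proof. intros Hr E; apply Hr; now injection E. Qed.

Lemma Cminus_1_neq_0 (z : C) : Cmod z < 1 -> (1 - z)%C <> 0%C.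
Proof.
  intros Hz E; assert (z = 1%C) by (apply Ceq_minus in E; auto).
  subst z; rewrite Cmod_1 in Hz; lra.
Qed.

Lemma Cplus_1_neq_0 (z : C) : Cmod z < 1 -> (1 + z)%C <> 0%C.
Proof.
  intros Hz; replace (1 + z)%C with (1 - - z)%C by ring.
  apply Cminus_1_neq_0; now rewrite Cmod_opp.
Qed.

Lemma Cmult_fix_eq (c s z : C) : (1 - z)%C <> 0%C -> (z * s = s - c)%C -> s = (c / (1 - z))%C.
Proof.
  intros Hz Hs.
  assert (E : (s * (1 - z) = c)%C) by (transitivity (s - z * s)%C; [ring | rewrite Hs; ring]).
  rewrite <- E; field; exact Hz.
Qed.

Lemma Cmult_sum_n_m (c : C) (a : nat -> C) (m n : nat) :
  (c * sum_n_m a m n)%C = sum_n_m (fun i => c * a i)%C m n.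
Proof. symmetry; exact (sum_n_m_mult_l (K := C_Ring) c a m n). Qed.

Lemma sum_n_m_Cmult_r (a : nat -> C) (c : C) (m n : nat) :
  (sum_n_m a m n * c)%C = sum_n_m (fun i => a i * c)%C m n.
Proof. symmetry; exact (sum_n_m_mult_r (K := C_Ring) c a m n). Qed.

Lemma RtoC_sum_n_m (f : nat -> R) (m n : nat) :
  RtoC (sum_n_m f m n) = sum_n_m (fun l => RtoC (f l)) m n.
Proof.
  induction n as [|n IH].
  - destruct m as [|m]; [now rewrite !sum_n_n | now rewrite !sum_n_m_zero by lia].
  - destruct (Nat.le_gt_cases m (S n)) as [Hm|Hm].
    + rewrite !sum_n_Sm, <- IH by lia; apply RtoC_plus.
    + now rewrite !sum_n_m_zero by lia.
Qed.

Lemma Re_sum_n (a : nat -> C) (n : nat) : Re (sum_n a n) = sum_n (fun k => Re (a k)) n.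
Proof. induction n as [|n IH]; [now rewrite !sum_O | rewrite !sum_Sn, <- IH; reflexivity]. Qed.

Lemma Im_sum_n (a : nat -> C) (n : nat) : Im (sum_n a n) = sum_n (fun k => Im (a k)) n.
Proof. induction n as [|n IH]; [now rewrite !sum_O | rewrite !sum_Sn, <- IH; reflexivity]. Qed.

Lemma is_series_C_iff (a : nat -> C) (l : C) :
  is_series a l <->
  is_series (fun n => Re (a n)) (Re l) /\ is_series (fun n => Im (a n)) (Im l).
Proof.
  unfold is_series; split.
  - intros Hl; split.
    + apply (filterlim_ext (fun n => Re (sum_n a n))); [intros n; apply Re_sum_n|].
      exact (filterlim_comp _ _ _ (sum_n a) fst _ _ _ Hl (continuous_fst (Re l) (Im l))).
    + apply (filterlim_ext (fun n => Im (sum_n a n))); [intros n; apply Im_sum_n|].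
      exact (filterlim_comp _ _ _ (sum_n a) snd _ _ _ Hl (continuous_snd (Re l) (Im l))).
  - intros [Hre Him].
    apply (filterlim_ext (fun n => (Re (sum_n a n), Im (sum_n a n)))).
    { intros n; symmetry; apply surjective_pairing. }
    destruct l as [lr li].
    apply (filterlim_filter_le_2 _ (G := filter_prod (locally lr) (locally li))).
    + intros P [eps HP].
      exists (ball lr eps) (ball li eps); try apply locally_ball.
      intros u v Hu Hv; apply HP; split; assumption.
    + apply filterlim_pair;
        [apply (filterlim_ext _ _ (fun n => eq_sym (Re_sum_n a n))) |
         apply (filterlim_ext _ _ (fun n => eq_sym (Im_sum_n a n)))]; assumption.
Qed.

Lemma is_series_C_unique (a : nat -> C) (l1 l2 : C) :
  is_series a l1 -> is_series a l2 -> l1 = l2.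
Proof. exact (filterlim_locally_unique (K := C_AbsRing) _ _ _). Qed.

Lemma is_series_C_tail (a : nat -> C) (l : C) :
  is_series a l -> is_series (fun m => a (S m)) (l - a 0%nat)%C.
Proof.
  intros Ha; apply is_series_incr_1.
  match goal with |- is_series _ ?v => replace v with l; [exact Ha|] end.
  change (l = l - a 0%nat + a 0%nat)%C; ring.
Qed.

Lemma ex_series_C_Cmod (a : nat -> C) : ex_series (fun n => Cmod (a n)) -> ex_series a.
Proof. apply (ex_series_le (V := C_CompleteNormedModule)); intros n; apply Rle_refl. Qed.

Lemma is_abs_series_ext (a b : nat -> C) (l : C) :
  (forall n, a n = b n) -> is_abs_series a l -> is_abs_series b l.
Proof.
  intros Hab [Ha Hl]; split.
  - apply (ex_series_ext (fun n => Cmod (a n))); [intros n; now rewrite Hab | exact Ha].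
  - exact (is_series_ext _ _ _ Hab Hl).
Qed.

Lemma is_abs_series_scal (c : C) (a : nat -> C) (l : C) :
  is_abs_series a l -> is_abs_series (fun n => c * a n)%C (c * l)%C.
Proof.
  intros [Ha Hl]; split.
  - apply (ex_series_ext (fun n => Cmod c * Cmod (a n))).
    + intros n; symmetry; apply Cmod_mult.
    + now apply (ex_series_scal_l (V := R_NormedModule)).
  - exact (is_series_scal c a l Hl).
Qed.

Lemma is_abs_series_plus (a b : nat -> C) (la lb : C) :
  is_abs_series a la -> is_abs_series b lb ->
  is_abs_series (fun n => a n + b n)%C (la + lb)%C.
Proof.
  intros [Ha Hla] [Hb Hlb]; split.
  - apply (ex_series_le (V := R_CompleteNormedModule) _ (fun n => Cmod (a n) + Cmod (b n))).
    + intros n; rewrite (Rabs_pos_eq _ (Cmod_ge_0 _)); apply Cmod_triangle.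
    + exact (ex_series_plus _ _ Ha Hb).
  - exact (is_series_plus _ _ _ _ Hla Hlb).
Qed.

Lemma is_abs_series_sum_n_m (a : nat -> nat -> C) (l : nat -> C) (m N : nat) :
  (m <= N)%nat -> (forall j, (m <= j <= N)%nat -> is_abs_series (a j) (l j)) ->
  is_abs_series (fun n => sum_n_m (fun j => a j n) m N) (sum_n_m l m N).
Proof.
  induction N as [|N IH]; intros HmN Hl.
  - replace m with 0%nat by lia.
    apply (is_abs_series_ext (a 0%nat)); [intros n; now rewrite sum_n_n|].
    rewrite sum_n_n; apply Hl; lia.
  - destruct (Nat.eq_dec m (S N)) as [->|HmN'].
    + apply (is_abs_series_ext (a (S N))); [intros n; now rewrite sum_n_n|].
      rewrite sum_n_n; apply Hl; lia.
    + rewrite sum_n_Sm by lia.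
      apply (is_abs_series_ext (fun n => sum_n_m (fun j => a j n) m N + a (S N) n)%C).
      { intros n; now rewrite sum_n_Sm by lia. }
      apply is_abs_series_plus; [apply IH; [lia|]; intros j Hj|]; apply Hl; lia.
Qed.

Lemma is_abs_series_shift (a : nat -> C) (N : nat) (l : C) :
  (forall n, (n < N)%nat -> a n = 0%C) ->
  is_abs_series (fun m => a (N + m)%nat) l -> is_abs_series a l.
Proof.
  intros Hzero [Hex Hl]; split.
  - now apply (ex_series_incr_n (fun n => Cmod (a n)) N).
  - destruct N as [|N]; [exact Hl|].
    apply (is_series_decr_n a (S N)); [lia|].
    assert (Hsum : sum_n a N = RtoC 0).
    { unfold sum_n; rewrite (sum_n_m_ext_loc _ (fun _ => zero));
        [exact (sum_n_m_const_zero (G := C_AbelianMonoid) 0 N) | intros n Hn; apply Hzero; lia]. }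
    change (pred (S N)) with N.
    match goal with |- is_series _ ?v => replace v with l; [exact Hl|] end.
    change (l = l - sum_n a N)%C; rewrite Hsum; ring.
Qed.

Lemma is_abs_series_geom_C (z : C) : Cmod z < 1 ->
  is_abs_series (fun n => Cpow z n) (/ (1 - z))%C.
Proof.
  intros Hz.
  assert (Hex : ex_series (fun n => Cmod (Cpow z n))).
  { apply (ex_series_ext (fun n => Cmod z ^ n)); [intros n; now rewrite Cmod_pow|].
    apply ex_series_geom; rewrite Rabs_pos_eq; [exact Hz | apply Cmod_ge_0]. }
  split; [exact Hex|].
  destruct (ex_series_C_Cmod _ Hex) as [s Hs]; change C in s.
  replace (/ (1 - z))%C with s; [exact Hs|].
  rewrite (Cmult_fix_eq 1 s z); [unfold Cdiv; ring | apply Cminus_1_neq_0, Hz|].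
  apply (is_series_C_unique (fun m => Cpow z (S m))).
  - exact (is_series_scal z _ _ Hs).
  - exact (is_series_C_tail _ _ Hs).
Qed.

(** * Binomial identities *)

Lemma binom_succ_mul_INR (n j : nat) : (j <= n)%nat ->
  Binomial.C (S n) (S j) * INR (S j) = Binomial.C n j * INR (S n).
Proof.
  intros Hjn; unfold Binomial.C; rewrite Nat.sub_succ, !fact_simpl, !mult_INR.
  field; repeat split; try apply INR_fact_neq_0; apply not_0_INR; lia.
Qed.

Lemma binom_pascal_diag (L m : nat) :
  Binomial.C (S L + S m) (S L) = Binomial.C (L + S m) L + Binomial.C (S L + m) (S L).
Proof.
  replace (S L + S m)%nat with (S (S L + m)) by lia.
  replace (L + S m)%nat with (S L + m)%nat by lia.
  rewrite <- pascal by lia; reflexivity.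
Qed.

(* The coefficients C(L + m, L) are those of the L-th derivative of the geometric series. *)
Lemma ex_series_binom_geom (L : nat) (r : R) : Rabs r < 1 ->
  ex_series (fun m => Rabs (Binomial.C (L + m) L * r ^ m)).
Proof.
  intros Hr.
  set (one := fun _ : nat => 1).
  assert (Hrad : Rbar_lt (Rabs r) (CV_radius (PS_derive_n L one))).
  { rewrite CV_radius_derive_n.
    apply (Rbar_lt_le_trans _ ((1 + Rabs r) / 2)); [simpl; lra|].
    apply CV_radius_bounded; exists 1; intros n.
    unfold one; rewrite Rmult_1_l, <- RPow_abs.
    pose proof (Rabs_pos r).
    rewrite <- (pow1 n) at 2; apply pow_incr.
    rewrite Rabs_pos_eq; lra. }
  apply (ex_series_ext
    (fun m => / INR (Factorial.fact L) * Rabs (PS_derive_n L one m * r ^ m))).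
  - intros m; unfold PS_derive_n, one, Binomial.C.
    replace (L + m - L)%nat with m by lia; rewrite (Nat.add_comm m L).
    rewrite <- (Rabs_pos_eq (/ INR (Factorial.fact L)))
      by (apply Rlt_le, Rinv_0_lt_compat, INR_fact_lt_0).
    rewrite <- Rabs_mult; f_equal; field; split; apply INR_fact_neq_0.
  - apply (ex_series_scal_l (V := R_NormedModule)), CV_disk_inside, Hrad.
Qed.

Lemma is_abs_series_negbinom (L : nat) (y : C) : Cmod y < 1 ->
  is_abs_series (fun m => RtoC (Binomial.C (L + m) L) * Cpow y m)%C
    (/ Cpow (1 - y) (S L))%C.
Proof.
  intros Hy.
  assert (Hex : forall L,
    ex_series (fun m => Cmod (RtoC (Binomial.C (L + m) L) * Cpow y m)%C)).
  { intros L'.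
    apply (ex_series_ext (fun m => Rabs (Binomial.C (L' + m) L' * Cmod y ^ m))).
    - intros m; rewrite Cmod_mult, Cmod_R, Cmod_pow, Rabs_mult.
      now rewrite (Rabs_pos_eq (Cmod y ^ m)) by (apply pow_le, Cmod_ge_0).
    - apply ex_series_binom_geom; now rewrite Rabs_pos_eq by apply Cmod_ge_0. }
  split; [apply Hex|].
  assert (H1y := Cminus_1_neq_0 y Hy).
  induction L as [|L IH].
  - apply (is_series_ext (fun m => Cpow y m)).
    { intros m; rewrite C_n_0; change (Cpow y m = 1 * Cpow y m)%C; ring. }
    replace (/ Cpow (1 - y) 1)%C with (/ (1 - y))%C by (f_equal; simpl; ring).
    apply is_abs_series_geom_C, Hy.
  - destruct (ex_series_C_Cmod _ (Hex (S L))) as [s Hs]; change C in s.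
    replace (/ Cpow (1 - y) (S (S L)))%C with s; [exact Hs|].
    rewrite (Cmult_fix_eq (/ Cpow (1 - y) (S L)) s y H1y).
    { simpl; field; split; [apply Cpow_nz|]; exact H1y. }
    (* Pascal's rule: the tail of the series is the tail at level L plus y times itself. *)
    pose proof (is_series_plus _ _ _ _ (is_series_C_tail _ _ IH) (is_series_scal y _ _ Hs))
      as Hsum.
    assert (Htail := is_series_C_tail _ _ Hs).
    eapply is_series_ext in Hsum.
    + apply (is_series_C_unique _ _ _ Hsum) in Htail.
      change (/ Cpow (1 - y) (S L) - RtoC (Binomial.C (L + 0) L) * Cpow y 0 + y * s
              = s - RtoC (Binomial.C (S L + 0) (S L)) * Cpow y 0)%C in Htail.
      rewrite !Nat.add_0_r, !C_n_n in Htail.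
      transitivity (/ Cpow (1 - y) (S L) - 1 * Cpow y 0 + y * s
                    - (/ Cpow (1 - y) (S L) - 1 * Cpow y 0))%C; [ring|].
      rewrite Htail; ring.
    + intros m; cbv beta; change (plus ?u ?v) with (u + v)%C; change (scal ?u ?v) with (u * v)%C.
      rewrite binom_pascal_diag, RtoC_plus; simpl; ring.
Qed.

Lemma Cpow_add_binomial (u w : C) (n : nat) :
  Cpow (u + w) n =
  sum_n (fun i => RtoC (Binomial.C n i) * Cpow u (n - i) * Cpow w i)%C n.
Proof.
  induction n as [|n IH]; [rewrite sum_O, C_n_0; simpl; ring|].
  set (G := fun i => (RtoC (Binomial.C n i) * Cpow u (n - i) * Cpow w i)%C) in IH.
  set (F := fun i => (RtoC (Binomial.C (S n) i) * Cpow u (S n - i) * Cpow w i)%C).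
  assert (HuG : (u * sum_n G n)%C = (F 0%nat + sum_n_m (fun i => u * G i) 1 n)%C).
  { unfold sum_n; rewrite Cmult_sum_n_m, sum_Sn_m by lia.
    change (plus ?a ?b) with (a + b)%C; f_equal.
    unfold F, G; rewrite !C_n_0, !Nat.sub_0_r; simpl; ring. }
  assert (HwG : (w * sum_n G n)%C =
                (sum_n_m (fun i => w * G (i - 1)%nat) 1 n + F (S n))%C).
  { replace (F (S n)) with (w * G (S n - 1)%nat)%C
      by (unfold F, G; rewrite Nat.sub_succ, Nat.sub_0_r, !C_n_n, !Nat.sub_diag; simpl; ring).
    change (w * sum_n G n = plus (sum_n_m (fun i => w * G (i - 1)%nat) 1 n)
                                 (w * G (S n - 1)%nat))%C.
    rewrite <- sum_n_Sm, <- sum_n_m_S by lia.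
    unfold sum_n; rewrite Cmult_sum_n_m; apply sum_n_m_ext; intros k.
    now rewrite Nat.sub_succ, Nat.sub_0_r. }
  assert (Hmid : sum_n_m F 1 n =
    (sum_n_m (fun i => u * G i) 1 n + sum_n_m (fun i => w * G (i - 1)%nat) 1 n)%C).
  { rewrite <- (sum_n_m_plus (G := C_AbelianMonoid)); apply sum_n_m_ext_loc.
    intros i Hi; unfold F, G; change (plus ?a ?b) with (a + b)%C.
    destruct i as [|i]; [lia|].
    replace (S i - 1)%nat with i by lia; rewrite <- pascal by lia.
    replace (S n - S i)%nat with (S (n - S i)) by lia.
    replace (n - i)%nat with (S (n - S i)) by lia.
    rewrite RtoC_plus; simpl; ring. }
  change (Cpow (u + w) (S n)) with ((u + w) * Cpow (u + w) n)%C; rewrite IH.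
  transitivity (u * sum_n G n + w * sum_n G n)%C; [ring|].
  rewrite HuG, HwG.
  unfold sum_n; rewrite (sum_Sn_m F), (sum_n_Sm F) by lia.
  change (plus ?a ?b) with (a + b)%C; rewrite Hmid.
  change (plus ?a ?b) with (a + b)%C; ring.
Qed.

(** * The sequences v(x ; c) *)

Lemma vseq_scal (c : R) (w c0 c1 : C) (l : nat) : (0 < l)%nat ->
  vseq (RtoC c * w) c0 l = (RtoC (c ^ l) * vseq w c1 l)%C.
Proof.
  intros Hl; destruct l as [|l]; [lia|].
  change (- Cpow (- (RtoC c * w)) (S l) / RtoC (INR (S l))
          = RtoC (c ^ S l) * (- Cpow (- w) (S l) / RtoC (INR (S l))))%C.
  replace (- (RtoC c * w))%C with (RtoC c * - w)%C by ring.
  rewrite Cpow_mult_l, RtoC_pow; field; apply RtoC_neq_0, not_0_INR; lia.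
Qed.

Lemma vseq_add_sub (p u c c' c'' : C) (k : nat) :
  (vseq (p + u) c (S k) - vseq p c' (S k))%C =
  sum_n_m (fun l => RtoC (Binomial.C k (l - 1)) * Cpow (- p) (S k - l) * vseq u c'' l)%C
    1 (S k).
Proof.
  set (T := fun i => (RtoC (Binomial.C (S k) i) * Cpow (- p) (S k - i) * Cpow (- u) i)%C).
  assert (HK : RtoC (INR (S k)) <> 0%C) by (apply RtoC_neq_0, not_0_INR; lia).
  rewrite (sum_n_m_ext_loc _ (fun l => - / RtoC (INR (S k)) * T l)%C).
  2:{ intros l Hl; destruct l as [|j]; [lia|].
      assert (EB : Binomial.C (S k) (S j) = Binomial.C k j * INR (S k) / INR (S j)).
      { rewrite <- binom_succ_mul_INR by lia; field; apply not_0_INR; lia. }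
      unfold T; rewrite EB, Nat.sub_succ, Nat.sub_0_r, RtoC_div, !RtoC_mult
        by (apply not_0_INR; lia).
      change (vseq u c'' (S j)) with (- Cpow (- u) (S j) / RtoC (INR (S j)))%C.
      change_eq C; field; split; [apply RtoC_neq_0, not_0_INR; lia | exact HK]. }
  rewrite <- Cmult_sum_n_m.
  change (- Cpow (- (p + u)) (S k) / RtoC (INR (S k)) - - Cpow (- p) (S k) / RtoC (INR (S k))
          = - / RtoC (INR (S k)) * sum_n_m T 1 (S k))%C.
  replace (- (p + u))%C with (- p + - u)%C by ring.
  rewrite Cpow_add_binomial; unfold sum_n; rewrite sum_Sn_m by lia; fold T.
  change (plus ?a ?b) with (a + b)%C.
  unfold T at 1; rewrite C_n_0, Nat.sub_0_r; simpl Cpow at 2.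
  fold T; field; exact HK.
Qed.

Definition binom_col (t : R) (l n : nat) : R :=
  if (l <=? n)%nat then Binomial.C n l * t ^ (n - l) else 0.

Lemma is_abs_series_binom_col_vseq (t : R) (x c0 c1 : C) (l : nat) :
  Cmod (RtoC t * x) < 1 -> (0 < l)%nat ->
  is_abs_series (fun n => RtoC (binom_col t l n) * vseq x c0 n)%C
    (vseq (x / (1 + RtoC t * x)) c1 l).
Proof.
  intros Htx Hl; destruct l as [|j]; [lia|]; unfold binom_col.
  apply (is_abs_series_shift _ (S j)).
  { intros n Hn; replace (S j <=? n)%nat with false by (symmetry; apply Nat.leb_gt; lia).
    change (0 * vseq x c0 n = 0)%C; ring. }
  apply (is_abs_series_ext
    (fun m => vseq x c1 (S j) * (RtoC (Binomial.C (j + m) j) * Cpow (- (RtoC t * x)) m))%C).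
  - intros m.
    replace (S j <=? S j + m)%nat with true by (symmetry; apply Nat.leb_le; lia).
    replace (S j + m - S j)%nat with m by lia.
    change (vseq x c0 (S j + m)) with (- Cpow (- x) (S j + m) / RtoC (INR (S j + m)))%C.
    change (vseq x c1 (S j)) with (- Cpow (- x) (S j) / RtoC (INR (S j)))%C.
    assert (EB : Binomial.C (S j + m) (S j) =
                 Binomial.C (j + m) j * INR (S j + m) / INR (S j)).
    { change (S j + m)%nat with (S (j + m)).
      rewrite <- binom_succ_mul_INR by lia; field; apply not_0_INR; lia. }
    rewrite EB, Cpow_add_r.
    replace (- (RtoC t * x))%C with (RtoC t * - x)%C by ring.
    rewrite Cpow_mult_l, <- RtoC_pow, !RtoC_mult, RtoC_div, !RtoC_mult
      by (apply not_0_INR; lia).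
    field; split; apply RtoC_neq_0, not_0_INR; lia.
  - replace (vseq (x / (1 + RtoC t * x)) c1 (S j))
      with (vseq x c1 (S j) * / Cpow (1 - - (RtoC t * x)) (S j))%C.
    + apply is_abs_series_scal, is_abs_series_negbinom; now rewrite Cmod_opp.
    + assert (H1 := Cplus_1_neq_0 _ Htx).
      change (- Cpow (- x) (S j) / RtoC (INR (S j)) * / Cpow (1 - - (RtoC t * x)) (S j)
        = - Cpow (- (x / (1 + RtoC t * x))) (S j) / RtoC (INR (S j)))%C.
      replace (1 - - (RtoC t * x))%C with (1 + RtoC t * x)%C by ring.
      replace (- (x / (1 + RtoC t * x)))%C with (- x * / (1 + RtoC t * x))%C
        by (field; exact H1).
      rewrite Cpow_mult_l, Cpow_inv by exact H1.
      field; split; [apply Cpow_nz, H1 | apply RtoC_neq_0, not_0_INR; lia].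
Qed.

(** * The logarithm series *)

Lemma Re_RtoC_mult (c : R) (z : C) : Re (RtoC c * z)%C = c * Re z.
Proof. destruct z; simpl; ring. Qed.

Lemma Im_RtoC_mult (c : R) (z : C) : Im (RtoC c * z)%C = c * Im z.
Proof. destruct z; simpl; ring. Qed.

Lemma Im_le_Cmod (z : C) : Rabs (Im z) <= Cmod z.
Proof. eapply Rle_trans; [apply Rmax_r | apply Rmax_Cmod]. Qed.

Lemma Re_1_plus_pos (z : C) : Cmod z < 1 -> 0 < Re (1 + z)%C.
Proof.
  intros Hz; change (Re (1 + z)%C) with (1 + Re z).
  pose proof (re_le_Cmod z); pose proof (Rle_abs (- Re z)); rewrite Rabs_Ropp in *; lra.
Qed.

Lemma ln_Cmod (z : C) : z <> 0%C -> ln (Cmod z) = ln (Re z ^ 2 + Im z ^ 2) / 2.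
Proof.
  intros Hz; apply Cmod_gt_0 in Hz.
  rewrite <- Cmod2_alt; replace (Cmod z ^ 2) with (Cmod z * Cmod z) by ring.
  rewrite ln_mult by lra; field.
Qed.

Lemma atan_double (T : R) : -1 < T < 1 -> 2 * atan T = atan (2 * T / (1 - T ^ 2)).
Proof.
  intros HT.
  assert (Hat : - (PI / 4) < atan T < PI / 4).
  { rewrite <- atan_1, <- atan_opp; split; apply atan_increasing; lra. }
  assert (HPI := PI_RGT_0).
  assert (Hcos : forall a, - (PI / 2) < a < PI / 2 -> cos a <> 0)
    by (intros a Ha; apply Rgt_not_eq, cos_gt_0; lra).
  rewrite <- (atan_tan (2 * atan T)) by lra; f_equal.
  rewrite tan_2a, tan_atan; [field; nra | apply Hcos; lra | apply Hcos; lra |].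
  rewrite tan_atan; nra.
Qed.

Lemma Carg_Re_pos (z : C) : 0 < Re z -> Carg z = atan (Im z / Re z).
Proof.
  intros Hu; unfold Carg.
  destruct (Req_EM_T (Im z) 0) as [Hv|Hv].
  - destruct (Rlt_dec (Re z) 0); [lra|].
    now rewrite Hv, Rdiv_0_l, atan_0.
  - assert (Hm : Cmod z ^ 2 = Re z ^ 2 + Im z ^ 2) by apply Cmod2_alt.
    assert (Hvm := Im_le_Cmod z).
    set (m := Cmod z) in *; set (u := Re z) in *; set (v := Im z) in *.
    pose proof (Rle_abs v); pose proof (Rle_abs (- v)); rewrite Rabs_Ropp in *.
    assert (Hmu : 0 < m + u) by lra.
    assert (HT : -1 < v / (m + u) < 1).
    { split; apply (Rmult_lt_reg_r (m + u)); try lra;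
        unfold Rdiv; rewrite Rmult_assoc, Rinv_l; lra. }
    rewrite atan_double by exact HT; f_equal.
    assert (Hden : (m + u) ^ 2 - v ^ 2 = 2 * u * (m + u)) by nra.
    replace (1 - (v / (m + u)) ^ 2) with (((m + u) ^ 2 - v ^ 2) / (m + u) ^ 2)
      by (field; lra).
    rewrite Hden; field; lra.
Qed.

Lemma CLog_RtoC (d : R) : 0 < d -> CLog (RtoC d) = RtoC (ln d).
Proof.
  intros Hd; unfold CLog; rewrite Cmod_R, Rabs_pos_eq, Carg_Re_pos by (simpl; lra).
  simpl Im; simpl Re; rewrite Rdiv_0_l, atan_0; change_eq C; ring.
Qed.

Lemma CLog_RtoC_mult (d : R) (z : C) : 0 < d -> 0 < Re z ->
  CLog (RtoC d * z)%C = (RtoC (ln d) + CLog z)%C.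
Proof.
  intros Hd Hz.
  assert (Hz0 : 0 < Cmod z) by (pose proof (re_le_Cmod z); pose proof (Rle_abs (Re z)); lra).
  unfold CLog; rewrite Cmod_mult, Cmod_R, Rabs_pos_eq, ln_mult by lra.
  rewrite !Carg_Re_pos, Re_RtoC_mult, Im_RtoC_mult by (try rewrite Re_RtoC_mult; nra).
  replace (d * Im z / (d * Re z)) with (Im z / Re z) by (field; lra).
  rewrite RtoC_plus; change_eq C; ring.
Qed.

Lemma Cmod_vseq_le (y : C) (n : nat) : Cmod (vseq y 0 n) <= Cmod y ^ n.
Proof.
  destruct n as [|n]; [simpl; rewrite Cmod_0; lra|].
  change (vseq y 0 (S n)) with (- Cpow (- y) (S n) / RtoC (INR (S n)))%C.
  rewrite Cmod_div by (apply RtoC_neq_0, not_0_INR; lia).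
  rewrite Cmod_opp, Cmod_pow, Cmod_opp, Cmod_R, Rabs_pos_eq by apply pos_INR.
  assert (1 <= INR (S n)) by (apply (le_INR 1); lia).
  assert (0 <= Cmod y ^ S n) by (apply pow_le, Cmod_ge_0).
  unfold Rdiv; rewrite <- (Rmult_1_r (Cmod y ^ S n)) at 2.
  apply Rmult_le_compat_l; [lra|].
  rewrite <- Rinv_1; apply Rinv_le_contravar; lra.
Qed.

Section LogSeries.

Variable y : C.
Hypothesis Hy : Cmod y < 1.

Lemma CV_radius_gt_1 (a : nat -> R) :
  (forall n, Rabs (a n) <= Cmod y ^ n) -> Rbar_lt 1 (CV_radius a).
Proof.
  intros Ha.
  set (rho := 2 / (1 + Cmod y)).
  assert (Hy0 : 0 <= Cmod y) by apply Cmod_ge_0.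
  assert (Hrho : 1 < rho).
  { unfold rho; apply (Rmult_lt_reg_r (1 + Cmod y)); [lra|]; field_simplify; lra. }
  assert (Hyrho : Cmod y * rho <= 1).
  { unfold rho; apply (Rmult_le_reg_r (1 + Cmod y)); [lra|]; field_simplify; lra. }
  apply (Rbar_lt_le_trans _ rho); [exact Hrho|].
  apply CV_radius_bounded; exists 1; intros n.
  rewrite Rabs_mult, <- RPow_abs, (Rabs_pos_eq rho) by lra.
  apply (Rle_trans _ ((Cmod y * rho) ^ n)).
  - rewrite Rpow_mult_distr; apply Rmult_le_compat_r; [apply pow_le; lra | apply Ha].
  - rewrite <- (pow1 n); apply pow_incr; nra.
Qed.

Lemma one_plus_Re_pos (r : R) : 0 <= r <= 1 -> 0 < 1 + r * Re y.
Proof.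
  intros Hr; assert (Hy1 : Rabs (Re y) < 1) by (eapply Rle_lt_trans; [apply re_le_Cmod | exact Hy]).
  apply Rabs_def2 in Hy1; nra.
Qed.

Lemma Re_Im_div_one_plus (r : R) : 0 <= r <= 1 ->
  let N := (1 + r * Re y) ^ 2 + (r * Im y) ^ 2 in
  Re (y / (1 + RtoC r * y))%C = (Re y + r * (Re y ^ 2 + Im y ^ 2)) / N /\
  Im (y / (1 + RtoC r * y))%C = Im y / N.
Proof.
  intros Hr N; assert (Hpos := one_plus_Re_pos r Hr); unfold N.
  destruct y as [u v]; simpl in *; unfold Cdiv, Cinv, Cmult; simpl; split; field; nra.
Qed.

Section Projection.

(* [proj] will be [Re] or [Im]. *)
Variable proj : C -> R.
Hypothesis proj_scal : forall (c : R) (z : C), proj (RtoC c * z)%C = c * proj z.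
Hypothesis proj_le : forall z, Rabs (proj z) <= Cmod z.
Hypothesis is_series_proj :
  forall (a : nat -> C) (l : C), is_series a l -> is_series (fun n => proj (a n)) (proj l).

Lemma CV_radius_proj_vseq : Rbar_lt 1 (CV_radius (fun n => proj (vseq y 0 n))).
Proof.
  apply CV_radius_gt_1; intros n.
  eapply Rle_trans; [apply proj_le | apply Cmod_vseq_le].
Qed.

Lemma is_derive_PSeries_proj_vseq (r : R) : 0 <= r <= 1 ->
  is_derive (PSeries (fun n => proj (vseq y 0 n))) r (proj (y / (1 + RtoC r * y))%C).
Proof.
  intros Hr.
  assert (Hry : Cmod (- (RtoC r * y))%C < 1).
  { rewrite Cmod_opp, Cmod_mult, Cmod_R, Rabs_pos_eq by lra.
    pose proof (Cmod_ge_0 y); nra. }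
  replace (proj (y / (1 + RtoC r * y))%C)
    with (PSeries (PS_derive (fun n => proj (vseq y 0 n))) r).
  - apply is_derive_PSeries.
    apply (Rbar_le_lt_trans _ 1); [simpl; rewrite Rabs_pos_eq; lra | apply CV_radius_proj_vseq].
  - apply is_series_unique.
    destruct (is_abs_series_geom_C _ Hry) as [_ Hgeom].
    replace (y / (1 + RtoC r * y))%C with (y * / (1 - - (RtoC r * y)))%C
      by (unfold Cdiv; do 2 f_equal; ring).
    apply (is_series_ext (fun n => proj (y * Cpow (- (RtoC r * y)) n)%C)).
    + intros n; unfold PS_derive; rewrite Rmult_comm, <- !proj_scal; f_equal.
      change (vseq y 0 (S n)) with (- Cpow (- y) (S n) / RtoC (INR (S n)))%C.
      replace (- (RtoC r * y))%C with (RtoC r * - y)%C by ring.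
      rewrite Cpow_mult_l, <- RtoC_pow, Cpow_S.
      field; apply RtoC_neq_0, not_0_INR; lia.
    + apply is_series_proj, (is_series_scal y _ _ Hgeom).
Qed.

Lemma is_series_proj_vseq (h : R -> R) :
  h 0 = 0 -> (forall r, 0 <= r <= 1 -> is_derive h r (proj (y / (1 + RtoC r * y))%C)) ->
  is_series (fun n => proj (vseq y 0 n)) (h 1).
Proof.
  intros Hh0 Hh.
  set (a := fun n => proj (vseq y 0 n)).
  assert (Ha0 : a 0%nat = 0).
  { unfold a; simpl vseq; rewrite <- (Cmult_0_l (RtoC 0)), proj_scal; ring. }
  assert (Hdiff : PSeries a 0 - h 0 = PSeries a 1 - h 1).
  { apply (eq_is_derive (fun r => PSeries a r - h r)); [|lra].
    intros r Hr.
    replace (@zero R_NormedModule) with (minus (proj (y / (1 + RtoC r * y))%C)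
                                               (proj (y / (1 + RtoC r * y))%C))
      by apply (minus_eq_zero (G := R_AbelianGroup)).
    apply (is_derive_minus (V := R_NormedModule));
      [apply is_derive_PSeries_proj_vseq | apply Hh]; exact Hr. }
  rewrite PSeries_0, Ha0, Hh0 in Hdiff.
  replace (h 1) with (PSeries a 1) by lra.
  assert (Hcv := CV_radius_inside a 1 ltac:(rewrite Rabs_R1; apply CV_radius_proj_vseq)).
  apply (is_series_ext (fun n => scal (pow_n 1 n) (a n))).
  - intros n; rewrite pow_n_pow, pow1; apply (scal_one (V := R_NormedModule)).
  - exact (PSeries_correct a 1 Hcv).
Qed.

End Projection.

Lemma is_series_Re_vseq : is_series (fun n => Re (vseq y 0 n)) (ln (Cmod (1 + y))).
Proof.
  replace (ln (Cmod (1 + y))) with (ln ((1 + 1 * Re y) ^ 2 + (1 * Im y) ^ 2) / 2).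
  - apply is_series_proj_vseq with (h := fun r => ln ((1 + r * Re y) ^ 2 + (r * Im y) ^ 2) / 2).
    + exact Re_RtoC_mult.
    + exact re_le_Cmod.
    + intros a l Hl; apply is_series_C_iff, Hl.
    + rewrite !Rmult_0_l, Rplus_0_r, pow1, pow_i, Rplus_0_r, ln_1 by lia; field.
    + intros r Hr; destruct (Re_Im_div_one_plus r Hr) as [-> _].
      assert (Hpos := one_plus_Re_pos r Hr).
      auto_derive; [nra | field; nra].
  - rewrite ln_Cmod by (apply Cplus_1_neq_0, Hy).
    do 2 f_equal; unfold Re, Im; simpl; ring.
Qed.

Lemma is_series_Im_vseq : is_series (fun n => Im (vseq y 0 n)) (Carg (1 + y)).
Proof.
  rewrite Carg_Re_pos by exact (Re_1_plus_pos y Hy).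
  assert (Hpos1 := one_plus_Re_pos 1 ltac:(lra)).
  replace (Im (1 + y)%C / Re (1 + y)%C) with (1 * Im y / (1 + 1 * Re y))
    by (change (Re (1 + y)%C) with (1 + Re y); unfold Im; simpl; field; lra).
  apply is_series_proj_vseq with (h := fun r => atan (r * Im y / (1 + r * Re y))).
  - exact Im_RtoC_mult.
  - exact Im_le_Cmod.
  - intros a l Hl; apply is_series_C_iff, Hl.
  - rewrite !Rmult_0_l, Rdiv_0_l; apply atan_0.
  - intros r Hr; destruct (Re_Im_div_one_plus r Hr) as [_ ->].
    assert (Hpos := one_plus_Re_pos r Hr).
    auto_derive; [lra | field; nra].
Qed.

Lemma is_abs_series_vseq_CLog : is_abs_series (vseq y 0) (CLog (1 + y)).
Proof.
  split.
  - apply (ex_series_le (V := R_CompleteNormedModule) _ (fun n => Cmod y ^ n)).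
    + intros n; rewrite (Rabs_pos_eq _ (Cmod_ge_0 _)); apply Cmod_vseq_le.
    + apply ex_series_geom; rewrite Rabs_pos_eq; [exact Hy | apply Cmod_ge_0].
  - apply is_series_C_iff; unfold CLog; simpl Re; simpl Im.
    replace (ln (Cmod (1 + y)) + (0 * Carg (1 + y) - 1 * 0)) with (ln (Cmod (1 + y))) by ring.
    replace (0 + (0 * 0 + 1 * Carg (1 + y))) with (Carg (1 + y)) by ring.
    split; [apply is_series_Re_vseq | apply is_series_Im_vseq].
Qed.

End LogSeries.

(** * Möbius maps *)

(* Every real Möbius map f with f(0) finite has this form, with p = f(0), D = f'(0) and
   t = f^T(0). *)
Definition mobius (p D t : R) (z : C) : C := (RtoC p + RtoC D * z / (1 + RtoC t * z))%C.

Definition mobius_entry (p D t : R) (k n : nat) : R :=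
  match k, n with
  | _, O => 0
  | O, S _ => t ^ n
  | S _, S _ =>
      sum_n_m (fun l => Binomial.C n l * Binomial.C (k - 1) (l - 1)
                        * t ^ (n - l) * (- p) ^ (k - l) * D ^ l) 1 (Nat.min k n)
  end.

Lemma mobius_0 (p D t : R) : mobius p D t 0 = RtoC p.
Proof. unfold mobius; field; rewrite Cmult_0_r, Cplus_0_r; apply C1_nz. Qed.

Lemma mobius_entry_succ (p D t : R) (k n : nat) :
  mobius_entry p D t (S k) n =
  sum_n_m (fun l => Binomial.C k (l - 1) * (- p) ^ (S k - l) * D ^ l * binom_col t l n)
    1 (S k).
Proof.
  unfold binom_col; destruct n as [|n].
  - symmetry; rewrite (sum_n_m_ext_loc _ (fun _ => zero));
      [exact (sum_n_m_const_zero (G := R_AbelianMonoid) _ _)|].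
    intros l Hl; replace (l <=? 0)%nat with false by (symmetry; apply Nat.leb_gt; lia).
    apply Rmult_0_r.
  - unfold mobius_entry; cbv beta iota; replace (S k - 1)%nat with k by lia.
    destruct (Nat.le_gt_cases k n) as [Hkn|Hkn].
    + rewrite Nat.min_l by lia; apply sum_n_m_ext_loc; intros l Hl.
      replace (l <=? S n)%nat with true by (symmetry; apply Nat.leb_le; lia).
      change_eq R; ring.
    + rewrite Nat.min_r, (sum_n_m_Chasles _ 1 (S n) (S k)) by lia.
      rewrite (sum_n_m_ext_loc _ (fun _ => zero) (S (S n))),
        (sum_n_m_const_zero (G := R_AbelianMonoid)), plus_zero_r.
      * apply sum_n_m_ext_loc; intros l Hl.
        replace (l <=? S n)%nat with true by (symmetry; apply Nat.leb_le; lia).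
        change_eq R; ring.
      * intros l Hl; replace (l <=? S n)%nat with false by (symmetry; apply Nat.leb_gt; lia).
        apply Rmult_0_r.
Qed.

Lemma vseq_mobius_sub_succ (p D t : R) (x c c' : C) (k : nat) :
  (vseq (mobius p D t x) c (S k) - vseq (mobius p D t 0) c' (S k))%C =
  sum_n_m (fun l => RtoC (Binomial.C k (l - 1) * (- p) ^ (S k - l) * D ^ l)
                    * vseq (x / (1 + RtoC t * x)) 0 l)%C 1 (S k).
Proof.
  rewrite mobius_0; unfold mobius.
  replace (RtoC D * x / (1 + RtoC t * x))%C with (RtoC D * (x / (1 + RtoC t * x)))%C
    by (unfold Cdiv; ring).
  rewrite (vseq_add_sub _ _ _ _ 0); apply sum_n_m_ext_loc; intros l Hl.
  rewrite (vseq_scal D _ 0 0) by lia.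
  rewrite !RtoC_mult, !RtoC_pow, RtoC_opp; change_eq C; ring.
Qed.

Theorem is_abs_series_mobius_entry_vseq (p D t : R) (x c0 : C) (k : nat) :
  Cmod (RtoC t * x) < 1 ->
  is_abs_series (fun n => RtoC (mobius_entry p D t k n) * vseq x c0 n)%C
    (vseq (mobius p D t x) (CLog (1 + RtoC t * x)) k - vseq (mobius p D t 0) 0 k)%C.
Proof.
  intros Htx; destruct k as [|k].
  - replace (vseq _ _ 0 - vseq _ _ 0)%C with (CLog (1 + RtoC t * x)) by (simpl; ring).
    apply (is_abs_series_ext (vseq (RtoC t * x) 0)); [|exact (is_abs_series_vseq_CLog _ Htx)].
    intros [|n]; [simpl; ring|].
    rewrite (vseq_scal t x 0 c0) by lia; reflexivity.
  - rewrite vseq_mobius_sub_succ.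
    apply (is_abs_series_ext (fun n => sum_n_m (fun l =>
      RtoC (Binomial.C k (l - 1) * (- p) ^ (S k - l) * D ^ l)
      * (RtoC (binom_col t l n) * vseq x c0 n))%C 1 (S k))).
    + intros n; rewrite mobius_entry_succ, RtoC_sum_n_m, sum_n_m_Cmult_r.
      apply sum_n_m_ext; intros l; rewrite !RtoC_mult; change_eq C; ring.
    + apply is_abs_series_sum_n_m; [lia|]; intros l Hl.
      apply is_abs_series_scal, is_abs_series_binom_col_vseq; [exact Htx | lia].
Qed.

Lemma affine_factor (ga de : R) (z : C) : de <> 0 ->
  (RtoC ga * z + RtoC de)%C = (RtoC de * (1 + RtoC (ga / de) * z))%C.
Proof. intros Hde; rewrite RtoC_div by exact Hde; field; apply RtoC_neq_0, Hde. Qed.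

Lemma mobius_normal_form (al be ga de : R) (z : C) :
  de <> 0 -> (1 + RtoC (ga / de) * z)%C <> 0%C ->
  ((RtoC al * z + RtoC be) / (RtoC ga * z + RtoC de))%C =
  mobius (be / de) ((al * de - be * ga) / (de * de)) (ga / de) z.
Proof.
  intros Hde H1; rewrite (affine_factor ga de z) by exact Hde.
  assert (Hde' : RtoC de <> 0%C) by (apply RtoC_neq_0, Hde).
  assert (Hdd : de * de <> 0) by (apply Rmult_integral_contrapositive; auto).
  unfold mobius; rewrite RtoC_div in H1 by exact Hde.
  rewrite !RtoC_div, RtoC_minus, !RtoC_mult by first [exact Hde | exact Hdd].
  field; split; [exact Hde'|]; intros E; apply H1.
  replace (1 + RtoC ga / RtoC de * z)%C with ((RtoC de + RtoC ga * z) / RtoC de)%C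
    by (field; exact Hde').
  rewrite E; unfold Cdiv; ring.
Qed.

Lemma CLog_affine_sub (ga de : R) (x : C) : 0 < de -> Cmod (RtoC (ga / de) * x) < 1 ->
  (CLog (RtoC ga * x + RtoC de) - CLog (RtoC ga * 0 + RtoC de))%C =
  CLog (1 + RtoC (ga / de) * x).
Proof.
  intros Hde Hx.
  rewrite affine_factor, CLog_RtoC_mult by (auto using Re_1_plus_pos; lra).
  replace (RtoC ga * 0 + RtoC de)%C with (RtoC de) by ring.
  rewrite CLog_RtoC by exact Hde; ring.
Qed.

(** * The matrices T_r *)

Section MatrixEntries.

Variables a b c d : R.
Hypothesis Hac : 0 < a + c.
Hypothesis Hbd : 0 < b + d.

Lemma delt_pos : 0 < delt a b c d.
Proof. unfold delt; lra. Qed.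

Lemma fT_0 : fT a b c d 0 = gam a b c d / delt a b c d.
Proof. unfold fT; pose proof delt_pos; field; lra. Qed.

Lemma Rabs_fT_0_lt_1 : Rabs (fT a b c d 0) < 1.
Proof.
  rewrite fT_0; pose proof delt_pos.
  unfold Rdiv; rewrite Rabs_mult, Rabs_inv, (Rabs_pos_eq (delt a b c d)) by lra.
  apply (Rmult_lt_reg_r (delt a b c d)); [lra|].
  rewrite Rmult_assoc, Rinv_l, Rmult_1_r, Rmult_1_l by lra.
  unfold gam, delt; apply Rabs_def1; lra.
Qed.

Lemma fC_mobius (z : C) : Cmod (RtoC (fT a b c d 0) * z) < 1 ->
  fC a b c d z = mobius (fR a b c d 0) (Derive (fR a b c d) 0) (fT a b c d 0) z.
Proof.
  intros Hz; pose proof delt_pos.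
  assert (Hp : fR a b c d 0 = bet a b c d / delt a b c d) by (unfold fR; field; lra).
  assert (HD : Derive (fR a b c d) 0 =
    (alph a b c d * delt a b c d - bet a b c d * gam a b c d) / (delt a b c d * delt a b c d)).
  { apply is_derive_unique; unfold fR; auto_derive; [lra | field; lra]. }
  rewrite Hp, HD, fT_0 in *; apply mobius_normal_form; [lra | apply Cplus_1_neq_0, Hz].
Qed.

Lemma ell_sub_ell_0 (x : C) : Cmod (RtoC (fT a b c d 0) * x) < 1 ->
  (ell a b c d x - ell a b c d 0)%C = CLog (1 + RtoC (fT a b c d 0) * x).
Proof. rewrite fT_0; apply CLog_affine_sub, delt_pos. Qed.

End MatrixEntries.

Theorem lemma3p9 :
  forall a b c d : R,
    0 < a -> 0 < b -> 0 < c -> 0 < d -> a * d - b * c <> 0 ->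
  forall (x c0 : C), Cmod x <= 1 ->
  forall k : nat,
    ex_series (fun n : nat => Cmod (RtoC (Tentry a b c d k n) * vseq x c0 n)%C) /\
    is_series (fun n : nat => (RtoC (Tentry a b c d k n) * vseq x c0 n)%C)
      (vseq (fC a b c d x) (ell a b c d x) k
       - vseq (fC a b c d 0) (ell a b c d 0) k)%C.
Proof.
  intros a b c d Ha Hb Hc Hd _ x c0 Hx k.
  assert (Hac : 0 < a + c) by lra; assert (Hbd : 0 < b + d) by lra.
  set (t := fT a b c d 0).
  assert (Htx : Cmod (RtoC t * x) < 1).
  { assert (Ht : Rabs t < 1) by exact (Rabs_fT_0_lt_1 _ _ _ _ Hac Hbd).
    rewrite Cmod_mult, Cmod_R; pose proof (Cmod_ge_0 x); pose proof (Rabs_pos t); nra. }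
  assert (H0 : Cmod (RtoC t * 0) < 1) by (rewrite Cmult_0_r, Cmod_0; lra).
  change (Tentry a b c d) with (mobius_entry (fR a b c d 0) (Derive (fR a b c d) 0) t).
  rewrite !fC_mobius by assumption.
  replace (vseq _ (ell a b c d x) k - vseq _ (ell a b c d 0) k)%C
    with (vseq (mobius (fR a b c d 0) (Derive (fR a b c d) 0) t x) (CLog (1 + RtoC t * x)) k
          - vseq (mobius (fR a b c d 0) (Derive (fR a b c d) 0) t 0) 0 k)%C.
  - exact (is_abs_series_mobius_entry_vseq _ _ _ x c0 k Htx).
  - destruct k as [|k]; [|reflexivity].
    simpl vseq; subst t; rewrite <- (ell_sub_ell_0 a b c d Hac Hbd x Htx); ring.
Qed.
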